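(* Let $G$ be a threshold graph with $s=\mathrm{seq}(G)$, and suppose $s$ contains at least two ones. Then the length $\psi(G)$ of a longest cycle in $G$ is $$\psi(G)=r(s)+1-h(s'),$$ where $s'=s_1s_2\cdots s_{r(s)-1}$.
   Context: A threshold graph on $n\ge1$ vertices is built from a base vertex $v_0$ by successively adding $v_1,\dots,v_{n-1}$, each either isolated (adjacent to no earlier vertex) or dominating (adjacent to all earlier vertices); its creation sequence $\mathrm{seq}(G)=s_1\cdots s_{n-1}$ has $s_i=1$ if $v_i$ is dominating and $s_i=0$ otherwise. For a binary string $s=s_1\cdots s_m$: $r(s)=\max(\{0\}\cup\{i: s_i=1\})$ (index of the right-most one, or $0$); for $0\le k\le m$ the $k$-th tail is $s_{m-k+1}\cdots s_m$ (empty for $k=0$), $z_k(s)$, $u_k(s)$ are its numbers of zeros and ones, and $h(s)=\max_{0\le k\le m}\{z_k(s)-u_k(s)\}$. *)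

From mathcomp Require Import all_boot all_order all_algebra.
Set Implicit Arguments. Unset Strict Implicit. Unset Printing Implicit Defensive.
Import Order.TTheory GRing.Theory Num.Theory.

(* Threshold graph with creation sequence s = s_1 ... s_m (s_i = nth false s (i-1)),
   on the n = m+1 vertices v_0,...,v_m, represented as 'I_(size s).+1.
   For i < j, v_i ~ v_j iff v_j is dominating, i.e. s_j = 1. *)
Definition tadj (s : seq bool) : rel 'I_(size s).+1 :=
  fun i j => ((i < j)%N && nth false s (j.-1)) || ((j < i)%N && nth false s (i.-1)).

Arguments tadj : clear implicits.

Definition graph_cycle (T : eqType) (e : rel T) (c : seq T) : Prop :=
  [/\ (3 <= size c)%N, uniq c & cycle e c].

Definition longest_cycle_length (T : eqType) (e : rel T) (k : nat) : Prop :=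
  (exists c, graph_cycle e c /\ size c = k) /\
  (forall c, graph_cycle e c -> (size c <= k)%N).

(* r(s): index (1-based) of the right-most one, or 0. *)
Definition rmost (s : seq bool) : nat :=
  \max_(i < size s | nth false s i) i.+1.

Definition tailk (s : seq bool) (k : nat) : seq bool := drop (size s - k) s.
Definition zk (s : seq bool) (k : nat) : nat := count negb (tailk s k).
Definition uk (s : seq bool) (k : nat) : nat := count id (tailk s k).

Definition hval (s : seq bool) : int :=
  \big[Num.max/0%R]_(k < (size s).+1) ((zk s k)%:Z - (uk s k)%:Z)%R.

(* Write r = r(s) and s' = s_1 ... s_(r-1); vertex v_r is adjacent to all of
   v_0, ..., v_(r-1) and the vertices after it are isolated and lie on no cycle.
   h(s') is computed by a left-to-right scan in which each one cancels an
   earlier uncancelled zero; it counts the zeros of s' never cancelled.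

   Lower bound: sweeping j = 1, ..., r-1, keep a path through all vertices
   v_0, ..., v_j except one per uncancelled zero.  A dominating v_j is adjacent
   to every vertex of the path, so it can be appended, followed by one vertex
   skipped earlier when there is one.  Closing the final path through v_r gives
   a cycle of length r + 1 - h(s').

   Upper bound: for a cycle C and a tail of length k of s', cut at m = r - k.
   C has at most m vertices below m.  Every isolated vertex at or above m is
   followed on C by a larger dominating vertex, and if C also visits vertices
   below m, it enters the upper part through a dominating vertex with a low
   predecessor.  Hence |C| <= m + 2 (u_k(s') + 1) - 1 = r + 1 - (z_k - u_k)(s'),
   and the best k gives r + 1 - h(s'). *)

From mathcomp Require Import all_boot all_order all_algebra zify.
Import Order.TTheory GRing.Theory Num.Theory.

Set Implicit Arguments.
Unset Strict Implicit.
Unset Printing Implicit Defensive.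

(* A one with no zero left to cancel is dropped, as [0.-1 = 0]. *)
Definition zero_excess (t : seq bool) : nat :=
  foldl (fun q (b : bool) => if b then q.-1 else q.+1) 0 t.

Lemma zero_excess_rcons t b :
  zero_excess (rcons t b) = if b then (zero_excess t).-1 else (zero_excess t).+1.
Proof. by rewrite /zero_excess foldl_rcons. Qed.

Lemma tailk0 t : tailk t 0 = [::].
Proof. by rewrite /tailk subn0 drop_size. Qed.

Lemma tailk_rcons t b k : k <= size t ->
  tailk (rcons t b) k.+1 = rcons (tailk t k) b.
Proof. by move=> le_k_t; rewrite /tailk size_rcons subSS drop_rcons ?leq_subr. Qed.

Lemma zk_rcons t b k : k <= size t -> zk (rcons t b) k.+1 = zk t k + ~~ b.
Proof. by move=> le_k_t; rewrite /zk tailk_rcons // -cats1 count_cat /= addn0. Qed.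

Lemma uk_rcons t b k : k <= size t -> uk (rcons t b) k.+1 = uk t k + b.
Proof. by move=> le_k_t; rewrite /uk tailk_rcons // -cats1 count_cat /= addn0. Qed.

Lemma zk_le_uk_zero_excess t k : k <= size t -> zk t k <= uk t k + zero_excess t.
Proof.
elim/last_ind: t k => [|t b IHt] [|k] //; try by rewrite /zk tailk0.
rewrite size_rcons ltnS => le_k_t; have := IHt k le_k_t.
by rewrite zk_rcons // uk_rcons // zero_excess_rcons; case: b => /=; lia.
Qed.

Lemma exists_zk_eq_uk_zero_excess t :
  exists2 k, k <= size t & zk t k = uk t k + zero_excess t.
Proof.
elim/last_ind: t => [|t b [k le_k_t IHk]].
  by exists 0; rewrite // /zk /uk tailk0.
rewrite zero_excess_rcons.
case: b (zero_excess t) IHk => [[|q]|q] IHk; first by exists 0; rewrite // /zk /uk tailk0.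
all: by exists k.+1; rewrite ?size_rcons // zk_rcons // uk_rcons //= IHk; lia.
Qed.

Lemma hval_zero_excess t : hval t = Posz (zero_excess t).
Proof.
apply/eqP; rewrite eq_le; apply/andP; split.
  apply: bigmax_le => // k _; rewrite lerBlDr -PoszD lez_nat addnC.
  exact: zk_le_uk_zero_excess (ltn_ord k).
have [k le_k_t tail_k] := exists_zk_eq_uk_zero_excess t.
apply: le_trans (le_bigmax _ _ (Ordinal (le_k_t : k < (size t).+1))) => /=.
by rewrite tail_k PoszD addrC addKr.
Qed.

Lemma zero_excess_lt_size t : has id t -> zero_excess t < size t.
Proof.
suff: zero_excess t + has id t <= size t by case: (has id t); rewrite ?addn1.
elim/last_ind: t => [|t b IHt] //.
by rewrite zero_excess_rcons has_rcons size_rcons; case: b => /=; lia.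
Qed.

Lemma size_tailk t k : k <= size t -> size (tailk t k) = k.
Proof. by move=> le_k_t; rewrite size_drop subKn. Qed.

Lemma zk_add_uk t k : k <= size t -> zk t k + uk t k = k.
Proof.
by move=> le_k_t; rewrite -[RHS](size_tailk le_k_t) -(count_predC id) addnC.
Qed.

Lemma count_uniq_le_size (T : eqType) (a : pred T) c l :
  uniq c -> {in c, forall x, a x -> x \in l} -> count a c <= size l.
Proof.
move=> uniq_c c_a_l; rewrite -size_filter uniq_leq_size ?filter_uniq //.
by move=> x; rewrite mem_filter => /andP[a_x x_c]; apply: c_a_l.
Qed.

Lemma sub_in_count_predD (T : eqType) (a b : pred T) s :
  {in s, subpred a b} -> count a s + has (predD b a) s <= count b s.
Proof.
elim: s => //= x s IHs sub_ab.
have /IHs le_s : {in s, subpred a b}.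
  by move=> y y_s; apply: sub_ab; rewrite inE y_s orbT.
have ab_x : a x ==> b x by apply/implyP/sub_ab/mem_head.
by case: (a x) (b x) ab_x => [] [] //= _; lia.
Qed.

Lemma exists_notin_iota (l : seq nat) n : uniq l -> size l < n ->
  exists2 v, v < n & v \notin l.
Proof.
move=> uniq_l lt_l_n.
have /hasP[v] : has (predC (mem l)) (iota 0 n).
  rewrite has_predC; apply: contraL lt_l_n => /allP iota_l.
  by rewrite -leqNgt -[n in n <= _](size_iota 0) uniq_leq_size ?iota_uniq.
by rewrite mem_iota => /= v_lt_n v_l; exists v.
Qed.

Section NextOnCycle.

Variables (T : eqType) (c : seq T).
Hypothesis uniq_c : uniq c.

Lemma perm_map_next : perm_eq (map (next c) c) c.
Proof.
apply: uniq_perm => //.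
  by rewrite (map_inj_uniq (can_inj (prev_next uniq_c))).
move=> x; apply/mapP/idP => [[y y_c ->]|x_c]; first by rewrite mem_next.
by exists (prev c x); rewrite ?mem_prev ?next_prev.
Qed.

Lemma count_next (a : pred T) : count (preim (next c) a) c = count a c.
Proof. by rewrite -count_map (permP perm_map_next). Qed.

Lemma has_next_cross (S : pred T) : has S c -> has (predC S) c ->
  has (fun x => ~~ S x && S (next c x)) c.
Proof.
move=> /hasP[x x_c Sx] /hasP[y y_c /= nSy]; apply: contraT => no_cross.
have: cycle (fun u v => ~~ S u ==> ~~ S v) c.
  apply: (cycle_from_next uniq_c) => z z_c; apply/implyP => nSz.
  by apply: contraNN no_cross => S_next; apply/hasP; exists z; rewrite ?nSz.
rewrite cycle_all2rel; last first.
  by move=> ? ? ? /implyP h1 /implyP h2; apply/implyP => /h1/h2.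
by move=> /allrelP/(_ y x y_c x_c); rewrite nSy Sx.
Qed.

End NextOnCycle.

(* The threshold graph on the vertices 0, 1, 2, ... of nat.  [dominating s 0]
   is a junk value, never consulted by the adjacency. *)
Definition dominating (s : seq bool) (v : nat) : bool := nth false s v.-1.

Definition tadj_nat (s : seq bool) : rel nat :=
  fun u v => ((u < v) && dominating s v) || ((v < u) && dominating s u).

Section Rmost.

Variable s : seq bool.

Lemma ltn_rmost i : nth false s i -> i < rmost s.
Proof.
case: (ltnP i (size s)) => [lt_i_s s_i|le_s_i]; last by rewrite nth_default.
exact: (leq_bigmax_cond (Ordinal lt_i_s) s_i).
Qed.

Lemma dominating_le_rmost v : dominating s v -> v <= rmost s.
Proof. by move=> /ltn_rmost; case: v. Qed.

Lemma rmost_le_size : rmost s <= size s.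
Proof. by apply/bigmax_leqP => i _; apply: ltn_ord. Qed.

Lemma size_take_rmost : size (take (rmost s).-1 s) = (rmost s).-1.
Proof.
by rewrite size_take_min; apply/minn_idPl/(leq_trans (leq_pred _) rmost_le_size).
Qed.

Lemma dominating_rmost : has id s -> 0 < rmost s /\ dominating s (rmost s).
Proof.
move=> /(has_nthP false)[i lt_i_s s_i].
have nonempty : 0 < #|(fun j : 'I_(size s) => nth false s j)|.
  by apply/card_gt0P; exists (Ordinal lt_i_s).
have [j s_j rmost_j] := @eq_bigmax_cond _ _ (fun j : 'I_(size s) => j.+1) nonempty.
by rewrite /rmost rmost_j.
Qed.

Lemma tadj_nat_le_rmost u v : tadj_nat s u v -> u <= rmost s.
Proof.
case/orP=> /andP[lt_uv dom_v]; last exact: dominating_le_rmost.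
exact/ltnW/(leq_trans lt_uv)/dominating_le_rmost.
Qed.

End Rmost.

Lemma count_take_rmost s :
  has id s -> count id (take (rmost s).-1 s) = (count id s).-1.
Proof.
move=> /dominating_rmost[r_gt0 dom_r].
have no_ones_after : count id (drop (rmost s) s) = 0.
  apply/eqP; rewrite -leqn0 leqNgt -has_count; apply/(has_nthP false) => -[i _].
  by rewrite nth_drop => /ltn_rmost; rewrite -{2}[rmost s]addn0 ltn_add2l.
rewrite -[in RHS](cat_take_drop (rmost s).-1 s) count_cat (drop_nth false); last first.
  by rewrite prednK // rmost_le_size.
by rewrite prednK //= [nth _ _ _]dom_r no_ones_after; lia.
Qed.

Lemma exists_long_path s j : j <= size s ->
  exists x p, [/\ path (tadj_nat s) x p, uniq (x :: p), all (leq^~ j) (x :: p)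
                & size p + zero_excess (take j s) = j].
Proof.
elim: j => [|j IHj] lt_j_s; first by exists 0, [::]; rewrite take0.
have [x [p [path_p uniq_p p_le_j size_p]]] := IHj (ltnW lt_j_s).
rewrite (take_nth false lt_j_s) zero_excess_rcons.
have p_le_Sj : all (leq^~ j.+1) (x :: p) by apply: sub_all p_le_j => v /leqW.
have Sj_notin_p : j.+1 \notin x :: p by apply/negP => /(allP p_le_j); rewrite ltnn.
case dom_Sj: (nth false s j); last by exists x, p; split => //; lia.
have to_Sj v : v <= j -> tadj_nat s v j.+1.
  by move=> le_v_j; rewrite /tadj_nat /dominating ltnS le_v_j dom_Sj.
have last_to_Sj : tadj_nat s (last x p) j.+1 by apply/to_Sj/(allP p_le_j)/mem_last.
case: (zero_excess (take j s)) size_p => [|q] size_p.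
  exists x, (rcons p j.+1); rewrite rcons_path path_p last_to_Sj -rcons_cons.
  rewrite rcons_uniq Sj_notin_p uniq_p all_rcons leqnn p_le_Sj size_rcons.
  by split => //; lia.
have [v lt_v_Sj v_notin_p] : exists2 v, v < j.+1 & v \notin x :: p.
  by apply: exists_notin_iota => //=; lia.
exists x, (p ++ [:: j.+1; v]); split.
- by rewrite cat_path path_p /= last_to_Sj /tadj_nat /dominating lt_v_Sj dom_Sj orbT.
- rewrite -cat_cons cat_uniq uniq_p /= (negbTE Sj_notin_p) (negbTE v_notin_p) inE andbT.
  by rewrite eq_sym neq_ltn lt_v_Sj.
- by rewrite -cat_cons all_cat p_le_Sj /= leqnn ltnW.
- by rewrite size_cat /=; lia.
Qed.

Lemma exists_long_cycle s : has id s ->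
  exists c : seq nat, [/\ uniq c, cycle (tadj_nat s) c, all (leq^~ (rmost s)) c
    & size c + zero_excess (take (rmost s).-1 s) = (rmost s).+1].
Proof.
move=> /dominating_rmost[r_gt0 dom_r].
have [x [p [path_p uniq_p p_le_pred_r size_p]]] :=
  exists_long_path (leq_trans (leq_pred _) (rmost_le_size s)).
have lt_r v : v \in x :: p -> v < rmost s.
  by move=> /(allP p_le_pred_r) /leq_ltn_trans; apply; rewrite ltn_predL.
have to_r v : v \in x :: p -> tadj_nat s v (rmost s).
  by move=> /lt_r lt_v_r; rewrite /tadj_nat dom_r lt_v_r.
exists [:: rmost s, x & p]; split.
- by rewrite cons_uniq uniq_p andbT; apply/negP => /lt_r; rewrite ltnn.
- rewrite /= rcons_path path_p to_r ?mem_last // andbT.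
  by rewrite /tadj_nat orbC dom_r lt_r ?mem_head.
- by rewrite /= leqnn; apply: sub_all p_le_pred_r => v /leq_trans; apply; apply: leq_pred.
- by rewrite /=; lia.
Qed.

Lemma cycle_size_le s (c : seq nat) m :
  uniq c -> cycle (tadj_nat s) c -> 0 < m -> m <= rmost s ->
  size c <= m + 2 * count (dominating s) (iota m (rmost s - m)) + 1.
Proof.
move=> uniq_c cycle_c m_gt0 le_m_r.
set r := rmost s in le_m_r *; set u := count _ _.
pose high v := m <= v.
pose A v := high v && ~~ dominating s v.
pose B v := high v && dominating s v.
have size_c : size c = count (predC high) c + count A c + count B c.
  elim: (c) => //= v l ->; rewrite /A /B /high.
  by case: leqP => _; case: dominating => /=; lia.
have low_le : count (predC high) c <= m.
  rewrite -[m in _ <= m](size_iota 0); apply: count_uniq_le_size => // v _.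
  by rewrite /= -ltnNge mem_iota.
have B_le : count B c <= u + 1.
  apply: leq_trans (_ : count (dominating s) (iota m (r - m + 1)) <= _); last first.
    by rewrite iotaD count_cat /= addn0 leq_add2l leq_b1.
  rewrite -[X in _ <= X]size_filter.
  apply: count_uniq_le_size => // v v_c /andP[le_m_v dom_v].
  rewrite mem_filter dom_v mem_iota [m <= v]le_m_v addnA subnKC //= addn1 ltnS.
  exact: tadj_nat_le_rmost (next_cycle cycle_c v_c).
have A_to_B : {in c, subpred A (preim (next c) B)}.
  move=> v v_c /andP[le_m_v /negbTE ndom_v].
  move: (next_cycle cycle_c v_c).
  rewrite /tadj_nat ndom_v andbF orbF => /andP[lt_v dom_next].
  by rewrite /= /B /high dom_next andbT (leq_trans le_m_v (ltnW lt_v)).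
have A_lt : count A c + (has high c && has (predC high) c) <= count B c.
  rewrite -(count_next uniq_c B); apply: leq_trans (sub_in_count_predD A_to_B).
  rewrite leq_add2l; case: (boolP (has high c)) => //= has_high.
  case: (boolP (has (predC high) c)) => //= has_low; rewrite lt0b.
  have /hasP[v v_c /andP[low_v high_next]] := has_next_cross uniq_c has_high has_low.
  apply/hasP; exists v => //=; rewrite /A (negbTE low_v) /= /B high_next /=.
  case/orP: (next_cycle cycle_c v_c) => /andP[lt_v dom] //.
  by move: low_v high_next; rewrite /high; lia.
have A_le_high : count A c <= count high c by apply: sub_count => v /andP[].
have B_le_high : count B c <= count high c by apply: sub_count => v /andP[].
case: (boolP (has high c)) A_lt => [_|]; last first.
  by rewrite has_count -leqNgt leqn0 => /eqP no_high _; lia.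
case: (boolP (has (predC high) c)) => [_|] /=; last first.
  by rewrite has_count -leqNgt leqn0 => /eqP no_low; lia.
lia.
Qed.

Lemma tailk_take_rmost s k : has id s -> k <= (rmost s).-1 ->
  tailk (take (rmost s).-1 s) k = map (dominating s) (iota (rmost s - k) k).
Proof.
move=> /dominating_rmost[r_gt0 _] le_k_r.
apply: (@eq_from_nth _ false).
  by rewrite size_map size_iota size_tailk ?size_take_rmost.
move=> i; rewrite size_tailk ?size_take_rmost // => lt_i_k.
rewrite nth_drop size_take_rmost nth_take; last by lia.
by rewrite (nth_map 0) ?size_iota // nth_iota // /dominating; congr nth; lia.
Qed.

Lemma cycle_size_add_zero_excess_le s (c : seq nat) : has id s -> uniq c ->
  cycle (tadj_nat s) c -> size c + zero_excess (take (rmost s).-1 s) <= (rmost s).+1.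
Proof.
move=> has_s uniq_c cycle_c; have [r_gt0 _] := dominating_rmost has_s.
have [k le_k tail_k] := exists_zk_eq_uk_zero_excess (take (rmost s).-1 s).
have zk_uk := zk_add_uk le_k; rewrite size_take_rmost in le_k.
have uk_tail :
    uk (take (rmost s).-1 s) k = count (dominating s) (iota (rmost s - k) k).
  by rewrite /uk tailk_take_rmost // count_map.
have k_lt_r : 0 < rmost s - k by lia.
have := cycle_size_le uniq_c cycle_c k_lt_r (leq_subr k _).
by rewrite subKn ?(leq_trans le_k (leq_pred _)) // -uk_tail; lia.
Qed.

Lemma graph_cycle_tadj_val s (c : seq 'I_(size s).+1) :
  graph_cycle (tadj s) c -> uniq (map val c) /\ cycle (tadj_nat s) (map val c).
Proof. by case=> _ uniq_c cycle_c; rewrite map_inj_uniq ?cycle_map //; apply: val_inj. Qed.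

Lemma graph_cycle_tadj_inord s (c : seq nat) :
  3 <= size c -> uniq c -> cycle (tadj_nat s) c -> all (leq^~ (size s)) c ->
  graph_cycle (tadj s) (map inord c).
Proof.
move=> size_c uniq_c cycle_c c_le_s.
have val_inord : map val (map (@inord (size s)) c) = c.
  by rewrite -map_comp -[RHS]map_id; apply/eq_in_map => v /(allP c_le_s) /inordK.
split; first by rewrite size_map.
  by rewrite -(map_inj_uniq val_inj) val_inord.
by move: cycle_c; rewrite -{1}val_inord cycle_map.
Qed.

Theorem mainTheorem9 (s : seq bool) :
  (2 <= count id s)%N ->
  exists k : nat, longest_cycle_length (tadj s) k /\
    (k%:Z = ((rmost s).+1)%:Z - hval (take (rmost s).-1 s))%R.
Proof.
move=> two_ones; have has_s : has id s by rewrite has_count; lia.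
have has_s' : has id (take (rmost s).-1 s) by rewrite has_count count_take_rmost //; lia.
have := zero_excess_lt_size has_s'; rewrite size_take_rmost => excess_lt.
have [c [uniq_c cycle_c c_le_r size_c]] := exists_long_cycle has_s.
exists (size c); split; last by rewrite hval_zero_excess -size_c PoszD addrK.
split=> [|c' /graph_cycle_tadj_val[uniq_c' cycle_c']].
  exists (map inord c); split; last by rewrite size_map.
  apply: graph_cycle_tadj_inord => //; first by lia.
  by apply: sub_all c_le_r => v /leq_trans; apply; apply: rmost_le_size.
have := cycle_size_add_zero_excess_le has_s uniq_c' cycle_c'.
by rewrite size_map -size_c leq_add2r.
Qed.
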